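(* Let $D=\sum_{\rho\in\Sigma}n_\rho D_\rho$ and $\Pi\subseteq\Sigma$. Then the set $C^{ss}_\Pi$ is nonempty if and only if the set $C^s_\Pi$ is nonempty.
   Context: $N\cong\mathbb{Z}^d$, $M=\operatorname{Hom}(N,\mathbb{Z})$, $M_\mathbb{R}=M\otimes\mathbb{R}$, $\sigma\subset N_\mathbb{R}$ a strongly convex rational polyhedral cone of dimension $d$, $\Sigma=\sigma(1)$ its set of rays with primitive generators $n(\rho)$, $(n_\rho)\in\mathbb{Z}^\Sigma$. $C^{ss}_\Pi=\{m\in M_\mathbb{R}:\langle m,n(\rho)\rangle<-n_\rho\ (\rho\in\Pi),\ \langle m,n(\rho)\rangle\ge-n_\rho\ (\rho\in\Sigma\setminus\Pi)\}$ and $C^s_\Pi$ is defined by the same inequalities with all inequalities strict ($>$ for $\rho\in\Sigma\setminus\Pi$). *)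

(* N = Z^d (integer vectors 'I_d -> int), M_R = N_R = R^d
   (real vectors 'I_d -> R) with the standard pairing. *)
From HB Require Import structures.
From mathcomp Require Import all_boot all_order all_algebra.
From mathcomp Require Import reals.
Set Implicit Arguments. Unset Strict Implicit. Unset Printing Implicit Defensive.
Import Order.TTheory GRing.Theory Num.Theory.
Local Open Scope ring_scope.

Section Cones.
Variables (R : realType) (d : nat).

Definition pairing (m x : 'I_d -> R) : R := \sum_(i < d) m i * x i.

Definition realvec (w : 'I_d -> int) : 'I_d -> R := fun i => (w i)%:~R.

Definition cone_gen (p : nat) (g : 'I_p -> 'I_d -> int) (x : 'I_d -> R) : Prop :=
  exists c : 'I_p -> R, (forall j, 0 <= c j) /\
    forall i, x i = \sum_(j < p) c j * (g j i)%:~R.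

Definition strongly_convex (sigma : ('I_d -> R) -> Prop) : Prop :=
  forall x, sigma x -> sigma (fun i => - x i) -> forall i, x i = 0.

Definition full_dim (p : nat) (g : 'I_p -> 'I_d -> int) : Prop :=
  forall x : 'I_d -> R, exists c : 'I_p -> R,
    forall i, x i = \sum_(j < p) c j * (g j i)%:~R.

Definition spans_ray (sigma : ('I_d -> R) -> Prop) (w : 'I_d -> R) : Prop :=
  (exists i, w i != 0) /\
  exists m : 'I_d -> R, (forall x, sigma x -> 0 <= pairing m x) /\
    forall x, (sigma x /\ pairing m x = 0) <-> exists t, 0 <= t /\ forall i, x i = t * w i.

Definition primitive (w : 'I_d -> int) : Prop :=
  forall c : int, (forall i, (c %| w i)%Z) -> `|c| = 1.

(* C^ss_Pi and C^s_Pi for rays indexed by 'I_k with primitive generators u *)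
Definition Css (k : nat) (u : 'I_k -> 'I_d -> int) (n : 'I_k -> int)
  (Pi : {set 'I_k}) (m : 'I_d -> R) : Prop :=
  forall rho : 'I_k,
    if rho \in Pi then pairing m (realvec (u rho)) < - (n rho)%:~R
    else - (n rho)%:~R <= pairing m (realvec (u rho)).

Definition Cs (k : nat) (u : 'I_k -> 'I_d -> int) (n : 'I_k -> int)
  (Pi : {set 'I_k}) (m : 'I_d -> R) : Prop :=
  forall rho : 'I_k,
    if rho \in Pi then pairing m (realvec (u rho)) < - (n rho)%:~R
    else - (n rho)%:~R < pairing m (realvec (u rho)).

End Cones.

From HB Require Import structures.
From mathcomp Require Import all_boot all_order all_algebra.
From mathcomp Require Import boolp reals lra zify.
Set Implicit Arguments. Unset Strict Implicit. Unset Printing Implicit Defensive.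
Import Order.TTheory GRing.Theory Num.Theory.
Local Open Scope ring_scope.

(* A point m of C^ss_Pi is pushed to m + e M, where M pairs positively with
   every ray generator: for small e > 0 the strict inequalities (rho in Pi)
   survive and the weak ones become strict.  Such an M is the sum of supporting
   functionals of the rays; the functional of a ray r vanishes on sigma only
   along r, and distinct primitive generators are never positively
   proportional, so it is positive on every other generator. *)

Lemma primitive_neq0 d (w : 'I_d -> int) : primitive w -> exists i, w i != 0.
Proof.
move=> prim_w; case: (pickP (fun i => w i != 0)) => [i wi_neq0|w_eq0].
  by exists i.
suff : `|2%:Z| = 1 by [].
by apply: prim_w => i; move/negbFE/eqP: (w_eq0 i) => ->; exact: dvdz0.
Qed.

Lemma primitive_cross_eq d (w w' : 'I_d -> int) i :
  primitive w -> primitive w' -> 0 < w' i * w i ->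
  (forall j, w' j * w i = w' i * w j) -> w' =1 w.
Proof.
move=> prim_w prim_w' cross_gt0 cross.
set g := gcdz (w' i) (w i).
have g_neq0 : g != 0.
  rewrite gcdz_eq0 negb_and; apply/orP; left.
  by apply: contraTneq cross_gt0 => ->; rewrite mul0r ltxx.
set a := (w' i %/ g)%Z; set b := (w i %/ g)%Z.
have def_a : w' i = a * g by rewrite divzK // dvdz_gcdl.
have def_b : w i = b * g by rewrite divzK // dvdz_gcdr.
have coprime_ab : coprimez a b.
  suff : gcdz a b = 1 by rewrite coprimezE /coprime => -[->].
  have abs_g : `|g|%:Z = g by [].
  by apply: (mulIf g_neq0); rewrite mul1r -[in LHS]abs_g mulz_gcdl -def_a -def_b.
have reduced j : w' j * b = a * w j.
  by apply: (mulIf g_neq0); rewrite -mulrA -def_b mulrAC -def_a.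
have b_unit : `|b| = 1.
  apply: prim_w => j; rewrite -(@Gauss_dvdzr b a) 1?coprimez_sym // -reduced.
  exact: dvdz_mull.
have a_unit : `|a| = 1.
  by apply: prim_w' => j; rewrite -(@Gauss_dvdzl a _ b) // reduced dvdz_mulr.
have ab_gt0 : 0 < a * b.
  by move: cross_gt0; rewrite def_a def_b mulrACA pmulr_lgt0 // mulr_gt0 ?lt_def ?g_neq0.
have eq_ab : a = b by nia.
have b_neq0 : b != 0 by rewrite -normr_eq0 b_unit.
by move=> j; apply: (mulIf b_neq0); rewrite reduced eq_ab mulrC.
Qed.

Lemma primitive_nonneg_multiple_eq (R : realType) d (w w' : 'I_d -> int) (t : R) :
  primitive w -> primitive w' -> 0 <= t ->
  (forall i, realvec R w' i = t * realvec R w i) -> w' = w.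
Proof.
move=> prim_w prim_w' t_ge0 w'_eq; apply: funext.
have [i w'i_neq0] := primitive_neq0 prim_w'.
have w'_eqR j : (w' j)%:~R = t * (w j)%:~R :> R := w'_eq j.
have /andP[t_neq0 wi_neq0] : (t != 0) && ((w i)%:~R != 0 :> R).
  by rewrite -negb_or -mulf_eq0 -w'_eqR intr_eq0.
apply: (primitive_cross_eq (i := i)) => // [|j].
  have t_gt0 : 0 < t by rewrite lt_def t_neq0.
  by rewrite -(ltr0z R) intrM w'_eqR -mulrA mulr_gt0 // -expr2 exprn_even_gt0.
by apply: (@intr_inj R); rewrite !intrM !w'_eqR mulrAC.
Qed.

Section Pairing.
Variables (R : realType) (d : nat).

Lemma pairingD (m1 m2 x : 'I_d -> R) :
  pairing (fun i => m1 i + m2 i) x = pairing m1 x + pairing m2 x.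
Proof. by rewrite /pairing -big_split; apply: eq_bigr => i _; rewrite mulrDl. Qed.

Lemma pairingZ c (m x : 'I_d -> R) :
  pairing (fun i => c * m i) x = c * pairing m x.
Proof. by rewrite /pairing mulr_sumr; apply: eq_bigr => i _; rewrite mulrA. Qed.

Lemma pairing_suml k (f : 'I_k -> 'I_d -> R) x :
  pairing (fun i => \sum_(r < k) f r i) x = \sum_(r < k) pairing (f r) x.
Proof. by rewrite /pairing exchange_big; apply: eq_bigr => i _; rewrite mulr_suml. Qed.

Lemma pairing_suml_gt0 k (f : 'I_k -> 'I_d -> R) x :
  (forall r, 0 <= pairing (f r) x) -> (exists r, 0 < pairing (f r) x) ->
  0 < pairing (fun i => \sum_(r < k) f r i) x.
Proof.
move=> f_ge0 [r fr_gt0]; rewrite pairing_suml (bigD1 r) //=.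
by rewrite ltr_pwDl // sumr_ge0.
Qed.

Lemma pairing_self_gt0 (w : 'I_d -> R) i : w i != 0 -> 0 < pairing w w.
Proof.
move=> wi_neq0; rewrite /pairing (bigD1 i) //= ltr_pwDl ?sumr_ge0 //.
  by rewrite -expr2 exprn_even_gt0.
by move=> j _; rewrite -expr2 sqr_ge0.
Qed.

End Pairing.

Lemma exists_small_pos (R : realFieldType) (I : finType) (A : {pred I}) (a b : I -> R) :
  (forall i, i \in A -> 0 < b i) -> exists2 e, 0 < e & forall i, i \in A -> e * a i < b i.
Proof.
move=> b_gt0; set S := \sum_(i in A) `|a i| / b i.
have ratio_ge0 i : i \in A -> 0 <= `|a i| / b i.
  by move=> /b_gt0 bi_gt0; rewrite divr_ge0 // ltW.
have S_ge0 : 0 <= S by apply: sumr_ge0.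
exists (1 + S)^-1 => [|i iA]; first by rewrite invr_gt0 ltr_pwDl.
have bi_gt0 := b_gt0 i iA.
have : `|a i| / b i <= S.
  by rewrite /S (bigD1 i) //= lerDl sumr_ge0 // => j /andP[/ratio_ge0].
rewrite ler_pdivrMr // => ai_le.
apply: (le_lt_trans (ler_wpM2l _ (ler_norm (a i)))); first by rewrite invr_ge0 addr_ge0.
rewrite mulrC ltr_pdivrMr ?ltr_pwDl //.
by apply: (le_lt_trans ai_le); rewrite mulrC ltr_pM2l // ltrDr.
Qed.

Section Chambers.
Variables (R : realType) (d k : nat) (u : 'I_k -> 'I_d -> int) (n : 'I_k -> int).
Variable Pi : {set 'I_k}.

Lemma Cs_Css (m : 'I_d -> R) : Cs u n Pi m -> Css u n Pi m.
Proof. by move=> m_s rho; move: (m_s rho); case: ifP => // _ /ltW. Qed.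

Lemma Css_shift_Cs (M m : 'I_d -> R) :
  (forall rho, 0 < pairing M (realvec R (u rho))) -> Css u n Pi m ->
  exists2 e, 0 < e & Cs u n Pi (fun i => m i + e * M i).
Proof.
move=> M_gt0 m_ss.
have gap_gt0 rho : rho \in Pi -> 0 < - (n rho)%:~R - pairing m (realvec R (u rho)).
  by move=> rho_Pi; move: (m_ss rho); rewrite rho_Pi subr_gt0.
have [e e_gt0 e_small] :=
  exists_small_pos (fun rho => pairing M (realvec R (u rho))) gap_gt0.
exists e => // rho; rewrite pairingD pairingZ.
move: (m_ss rho) (e_small rho); case: ifP => _ m_rho.
  by move=> /(_ isT); lra.
by have := mulr_gt0 e_gt0 (M_gt0 rho); lra.
Qed.

End Chambers.

Section Rays.
Variables (R : realType) (d : nat) (sigma : ('I_d -> R) -> Prop).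

Definition supports_ray (m w : 'I_d -> R) : Prop :=
  (forall x, sigma x -> 0 <= pairing m x) /\
  forall x, (sigma x /\ pairing m x = 0) <-> exists t, 0 <= t /\ forall i, x i = t * w i.

Lemma supports_ray_mem m w : supports_ray m w -> sigma w.
Proof.
by case=> _ /(_ w) [_ []] //; exists 1; split=> // i; rewrite mul1r.
Qed.

Lemma supports_ray_gt0 m (w w' : 'I_d -> int) :
  supports_ray m (realvec R w) -> primitive w -> primitive w' ->
  sigma (realvec R w') -> w' <> w -> 0 < pairing m (realvec R w').
Proof.
move=> [m_ge0 m_zero] prim_w prim_w' w'_mem w'_neq.
rewrite lt_def m_ge0 // andbT; apply/eqP => m_w'0.
have [t [t_ge0 w'_eq]] := (m_zero _).1 (conj w'_mem m_w'0).
exact/w'_neq/(primitive_nonneg_multiple_eq prim_w prim_w' t_ge0).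
Qed.

Lemma exists_pos_on_rays k (u : 'I_k -> 'I_d -> int) :
  injective u -> (forall rho, primitive (u rho)) ->
  (forall rho, spans_ray sigma (realvec R (u rho))) ->
  exists M, forall rho, 0 < pairing M (realvec R (u rho)).
Proof.
move=> u_inj u_prim u_ray.
have [k_le1 | k_gt1] := leqP k 1.
  (* a lone ray is killed by its own supporting functional; pair it with itself *)
  exists (fun i => \sum_(r < k) realvec R (u r) i) => rho.
  have r_eq r : r = rho by apply: ord_inj; have := ltn_ord r; have := ltn_ord rho; lia.
  have [i ui_neq0] := primitive_neq0 (u_prim rho).
  have self_gt0 : 0 < pairing (realvec R (u rho)) (realvec R (u rho)).
    by apply: (pairing_self_gt0 (i := i)); rewrite intr_eq0.
  by apply: pairing_suml_gt0 => [r|]; [rewrite (r_eq r) ltW | exists rho].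
have [mm mm_supp] : exists mm, forall r, supports_ray (mm r) (realvec R (u r)).
  exact: fin_all_exists (fun r => (u_ray r).2).
exists (fun i => \sum_(r < k) mm r i) => rho.
have u_mem r : sigma (realvec R (u r)) := supports_ray_mem (mm_supp r).
apply: pairing_suml_gt0 => [r|]; first exact: (mm_supp r).1.
have [r r_neq] : exists r, r != rho.
  by apply/(@card_gt0P _ (predC1 rho)); rewrite cardC1 card_ord; lia.
exists r; apply: supports_ray_gt0 (mm_supp r) (u_prim r) (u_prim rho) (u_mem rho) _.
by move/u_inj/eqP; rewrite eq_sym (negbTE r_neq).
Qed.

End Rays.

Theorem mainTheorem5 (R : realType) (d p k : nat)
  (g : 'I_p -> 'I_d -> int) (u : 'I_k -> 'I_d -> int)
  (nr : 'I_k -> int) (Pi : {set 'I_k}) :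
  strongly_convex (@cone_gen R d p g) ->
  @full_dim R d p g ->
  injective u ->
  (forall rho, primitive (u rho) /\ spans_ray (@cone_gen R d p g) (@realvec R d (u rho))) ->
  (forall w : 'I_d -> R, spans_ray (@cone_gen R d p g) w ->
     exists rho, exists t : R, 0 < t /\ forall i, w i = t * @realvec R d (u rho) i) ->
  (exists m : 'I_d -> R, @Css R d k u nr Pi m) <-> (exists m : 'I_d -> R, @Cs R d k u nr Pi m).
Proof.
move=> _ _ u_inj u_rays _.
split=> [[m m_ss] | [m m_s]]; last by exists m; exact: Cs_Css.
have [M M_gt0] := exists_pos_on_rays u_inj
  (fun rho => (u_rays rho).1) (fun rho => (u_rays rho).2).
by have [e _ shift_s] := Css_shift_Cs M_gt0 m_ss; exists (fun i => m i + e * M i).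
Qed.
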